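(* Let $A_1A_2A_3A_4$ be a convex quadrilateral in $\mathbb{R}^2$ and let $c>0$. Consider positive weights $(B_1)_{1234},(B_2)_{1234},(B_3)_{1234},(B_4)_{1234}$ (variable weights) for which the weighted floating case holds and the weighted Fermat–Torricelli point (the minimizer of $\sum_{i=1}^4 (B_i)_{1234}\|X-A_i\|$) is a fixed interior point $A_0$, and write $\alpha_{i0j}=\angle A_iA_0A_j$. Then the dynamic plasticity of this variable weighted Fermat–Torricelli tree of degree four is given by the three equations \[ (B_1)_{1234}^2+(B_2)_{1234}^2+2(B_1)_{1234}(B_2)_{1234}\cos\alpha_{102}=(B_3)_{1234}^2+(B_4)_{1234}^2+2(B_3)_{1234}(B_4)_{1234}\cos\alpha_{304}, \] \[ (B_1)_{1234}^2+(B_4)_{1234}^2+2(B_1)_{1234}(B_4)_{1234}\cos\alpha_{104}=(B_2)_{1234}^2+(B_3)_{1234}^2+2(B_2)_{1234}(B_3)_{1234}\cos\alpha_{203}, \] \[ (B_1)_{1234}+(B_2)_{1234}+(B_3)_{1234}+(B_4)_{1234}=c. \]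
   Context: The weighted floating case for weights $B_i$ at $A_i$ means $\left\|\sum_{j\ne i}B_j\vec u_{ij}\right\|>B_i$ for each $i$, where $\vec u_{kl}$ is the unit vector from $A_k$ to $A_l$; then the weighted Fermat–Torricelli point $A_0$ is not a vertex and satisfies $\sum_{i=1}^4B_i\vec u_{0i}=\vec 0$. The dynamic plasticity of a weighted Fermat–Torricelli tree of degree four is the set of quadruples of weights with fixed sum $c$ for which the weighted Fermat–Torricelli point (and hence the tree joining it to the four vertices) stays the same for the fixed quadrilateral. *)

From Stdlib Require Import Reals Lra.
Open Scope R_scope.

Definition pt := (R * R)%type.

Definition vsub (P Q : pt) : pt := (fst P - fst Q, snd P - snd Q).
Definition vadd (P Q : pt) : pt := (fst P + fst Q, snd P + snd Q).
Definition vscale (a : R) (P : pt) : pt := (a * fst P, a * snd P).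
Definition dot (P Q : pt) : R := fst P * fst Q + snd P * snd Q.
Definition vnorm (P : pt) : R := sqrt (dot P P).
Definition dist (P Q : pt) : R := vnorm (vsub Q P).
Definition cross (P Q : pt) : R := fst P * snd Q - snd P * fst Q.
Definition orient (P Q S : pt) : R := cross (vsub Q P) (vsub S P).

Definition unitv (Ak Al : pt) : pt := vscale (/ dist Ak Al) (vsub Al Ak).

Definition angle (Ai A0 Aj : pt) : R :=
  acos (dot (vsub Ai A0) (vsub Aj A0) / (vnorm (vsub Ai A0) * vnorm (vsub Aj A0))).

Definition convex_quad (A1 A2 A3 A4 : pt) : Prop :=
  (0 < orient A1 A2 A3 /\ 0 < orient A2 A3 A4 /\ 0 < orient A3 A4 A1 /\ 0 < orient A4 A1 A2)
  \/
  (orient A1 A2 A3 < 0 /\ orient A2 A3 A4 < 0 /\ orient A3 A4 A1 < 0 /\ orient A4 A1 A2 < 0).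

Definition interior_quad (A1 A2 A3 A4 X : pt) : Prop :=
  (0 < orient A1 A2 X /\ 0 < orient A2 A3 X /\ 0 < orient A3 A4 X /\ 0 < orient A4 A1 X)
  \/
  (orient A1 A2 X < 0 /\ orient A2 A3 X < 0 /\ orient A3 A4 X < 0 /\ orient A4 A1 X < 0).

Definition floating_case (A1 A2 A3 A4 : pt) (B1 B2 B3 B4 : R) : Prop :=
  vnorm (vadd (vscale B2 (unitv A1 A2)) (vadd (vscale B3 (unitv A1 A3)) (vscale B4 (unitv A1 A4)))) > B1 /\
  vnorm (vadd (vscale B1 (unitv A2 A1)) (vadd (vscale B3 (unitv A2 A3)) (vscale B4 (unitv A2 A4)))) > B2 /\
  vnorm (vadd (vscale B1 (unitv A3 A1)) (vadd (vscale B2 (unitv A3 A2)) (vscale B4 (unitv A3 A4)))) > B3 /\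
  vnorm (vadd (vscale B1 (unitv A4 A1)) (vadd (vscale B2 (unitv A4 A2)) (vscale B3 (unitv A4 A3)))) > B4.

Definition wft_fun (A1 A2 A3 A4 : pt) (B1 B2 B3 B4 : R) (X : pt) : R :=
  B1 * dist X A1 + B2 * dist X A2 + B3 * dist X A3 + B4 * dist X A4.

Definition is_wft_point (A1 A2 A3 A4 : pt) (B1 B2 B3 B4 : R) (X : pt) : Prop :=
  forall Y : pt, wft_fun A1 A2 A3 A4 B1 B2 B3 B4 X <= wft_fun A1 A2 A3 A4 B1 B2 B3 B4 Y.

Definition dynamic_plasticity (A1 A2 A3 A4 A0 : pt) (c : R) (B1 B2 B3 B4 : R) : Prop :=
  0 < B1 /\ 0 < B2 /\ 0 < B3 /\ 0 < B4 /\
  floating_case A1 A2 A3 A4 B1 B2 B3 B4 /\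
  B1 + B2 + B3 + B4 = c /\
  is_wft_point A1 A2 A3 A4 B1 B2 B3 B4 A0.

(* Write u_i for the unit vector from A0 to A_i and S = sum_i B_i u_i.  The
   objective is bounded below by its tangent plane at A0 (slope -S) and above,
   along the ray A0 + t S, by a quadratic with slope -|S|^2; hence A0 is the
   minimizer iff S = 0.  By the law of cosines the two equations say
   |a| = |b| and |c| = |d| for a = B1u1+B2u2, b = B3u3+B4u4, c = B1u1+B4u4,
   d = B2u2+B3u3, i.e. S = a+b = c+d is orthogonal to a-b and to c-d.  The cross
   product of a-b and c-d is -2 sum_i B_i B_(i+1) (u_i x u_(i+1)), whose terms
   all share the sign of the orientation of A_i A_(i+1) A0; so for A0 strictly
   inside the quadrilateral these two vectors are independent and S = 0. *)

From Pilot Require Import Defs.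
From Stdlib Require Import Reals Lra.
Open Scope R_scope.

Lemma dot_self_ge0 (P : pt) : 0 <= dot P P.
Proof. unfold dot; nra. Qed.

Lemma vnorm_mul_self (P : pt) : vnorm P * vnorm P = dot P P.
Proof. apply sqrt_sqrt, dot_self_ge0. Qed.

Lemma lagrange_identity (P Q : pt) : dot P Q ^ 2 + cross P Q ^ 2 = dot P P * dot Q Q.
Proof. destruct P, Q; unfold dot, cross; simpl; ring. Qed.

Lemma dot_le_vnorm_mul (P Q : pt) : dot P Q <= vnorm P * vnorm Q.
Proof.
  pose proof (lagrange_identity P Q) as HL.
  rewrite <- (vnorm_mul_self P), <- (vnorm_mul_self Q) in HL.
  assert (Hn : 0 <= vnorm P * vnorm Q) by (apply Rmult_le_pos; apply sqrt_pos).
  nra.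
Qed.

Lemma dot_self_eq0 (P : pt) : dot P P = 0 -> P = (0, 0).
Proof. destruct P as [p1 p2]; unfold dot; simpl; intros H; f_equal; nra. Qed.

Lemma dist_pos_of_orient_neq0 (A B X : pt) : orient A B X <> 0 -> 0 < Defs.dist X A.
Proof.
  intros Ho; apply sqrt_lt_R0.
  destruct A as [a1 a2], B as [b1 b2], X as [x1 x2].
  unfold orient, cross, dot, vsub in *; simpl in *.
  destruct (Req_dec (a1 - x1) 0), (Req_dec (a2 - x2) 0); nra.
Qed.

Lemma interior_quad_dist_pos (A1 A2 A3 A4 X : pt) :
  interior_quad A1 A2 A3 A4 X ->
  0 < Defs.dist X A1 /\ 0 < Defs.dist X A2 /\ 0 < Defs.dist X A3 /\ 0 < Defs.dist X A4.
Proof.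
  intros Hint.
  repeat split; [apply (dist_pos_of_orient_neq0 A1 A2) | apply (dist_pos_of_orient_neq0 A2 A3)
                | apply (dist_pos_of_orient_neq0 A3 A4) | apply (dist_pos_of_orient_neq0 A4 A1)];
    destruct Hint as [H | H]; lra.
Qed.

Section UnitVector.

Variables X A : pt.
Hypothesis dist_XA_pos : 0 < Defs.dist X A.

Lemma dot_unitv_l (P : pt) : dot (unitv X A) P = dot (vsub A X) P / Defs.dist X A.
Proof. unfold unitv, vscale, dot, Rdiv; simpl; ring. Qed.

Lemma dot_unitv_vsub : dot (unitv X A) (vsub A X) = Defs.dist X A.
Proof.
  rewrite dot_unitv_l, <- vnorm_mul_self; unfold Defs.dist; field.
  exact (Rgt_not_eq _ _ dist_XA_pos).
Qed.

Lemma dot_unitv_self : dot (unitv X A) (unitv X A) = 1.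
Proof.
  rewrite dot_unitv_l.
  replace (dot (vsub A X) (unitv X A)) with (dot (unitv X A) (vsub A X))
    by (unfold dot; ring).
  rewrite dot_unitv_vsub; field; lra.
Qed.

Lemma vnorm_unitv : vnorm (unitv X A) = 1.
Proof. unfold vnorm; rewrite dot_unitv_self; exact sqrt_1. Qed.

Lemma dist_ge_tangent (Y : pt) :
  Defs.dist X A - dot (unitv X A) (vsub Y X) <= Defs.dist Y A.
Proof.
  pose proof (dot_le_vnorm_mul (unitv X A) (vsub A Y)) as HCS.
  rewrite vnorm_unitv, Rmult_1_l in HCS.
  rewrite <- dot_unitv_vsub.
  replace (dot (unitv X A) (vsub A X) - dot (unitv X A) (vsub Y X))
    with (dot (unitv X A) (vsub A Y)) by (unfold dot, vsub; simpl; ring).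
  exact HCS.
Qed.

End UnitVector.

Lemma cos_angle (A X B : pt) :
  0 < Defs.dist X A -> 0 < Defs.dist X B ->
  cos (angle A X B) = dot (unitv X A) (unitv X B).
Proof.
  intros HA HB.
  assert (Hq : dot (unitv X A) (unitv X B)
               = dot (vsub A X) (vsub B X) / (vnorm (vsub A X) * vnorm (vsub B X))).
  { unfold unitv, Defs.dist, vscale, dot, Rdiv; simpl; rewrite Rinv_mult; ring. }
  unfold angle; rewrite <- Hq; apply cos_acos.
  pose proof (lagrange_identity (unitv X A) (unitv X B)) as HL.
  rewrite !dot_unitv_self in HL by assumption.
  nra.
Qed.

Lemma cross_unitv (X A B : pt) :
  0 < Defs.dist X A -> 0 < Defs.dist X B ->
  cross (unitv X A) (unitv X B) = orient A B X / (Defs.dist X A * Defs.dist X B).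
Proof.
  intros HA HB; unfold unitv, orient, cross, vscale, vsub; simpl.
  field; lra.
Qed.

Lemma sqrt_le_arith_mean (x n : R) : 0 < n -> 0 <= x -> sqrt x <= (x + n ^ 2) / (2 * n).
Proof.
  intros Hn Hx.
  apply (Rmult_le_reg_l (2 * n)); [lra|].
  replace (2 * n * ((x + n ^ 2) / (2 * n))) with (x + n ^ 2) by (field; lra).
  pose proof (sqrt_sqrt x Hx).
  pose proof (pow2_ge_0 (sqrt x - n)).
  nra.
Qed.

Lemma dist_le_quadratic (X A s : pt) (t : R) : 0 < Defs.dist X A ->
  Defs.dist (vadd X (vscale t s)) A
  <= Defs.dist X A - t * dot (unitv X A) s + t ^ 2 * dot s s / (2 * Defs.dist X A).
Proof.
  intros Hd.
  eapply Rle_trans; [apply sqrt_le_arith_mean; [exact Hd | apply dot_self_ge0]|].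
  right; rewrite dot_unitv_l.
  assert (Hn2 : Defs.dist X A ^ 2 = dot (vsub A X) (vsub A X))
    by (rewrite <- vnorm_mul_self; unfold Defs.dist; ring).
  assert (HQ : dot (vsub A (vadd X (vscale t s))) (vsub A (vadd X (vscale t s)))
               = dot (vsub A X) (vsub A X) - 2 * t * dot (vsub A X) s + t ^ 2 * dot s s)
    by (unfold dot, vsub, vadd, vscale; simpl; ring).
  rewrite HQ, <- Hn2; field; lra.
Qed.

Definition weighted_sum4 (B1 B2 B3 B4 : R) (u1 u2 u3 u4 : pt) : pt :=
  vadd (vscale B1 u1) (vadd (vscale B2 u2) (vadd (vscale B3 u3) (vscale B4 u4))).

Section WeightedFermatTorricelliPoint.

Variables A1 A2 A3 A4 X : pt.
Variables B1 B2 B3 B4 : R.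
Hypotheses (B1_ge0 : 0 <= B1) (B2_ge0 : 0 <= B2) (B3_ge0 : 0 <= B3) (B4_ge0 : 0 <= B4).
Hypotheses (dist1_pos : 0 < Defs.dist X A1) (dist2_pos : 0 < Defs.dist X A2)
           (dist3_pos : 0 < Defs.dist X A3) (dist4_pos : 0 < Defs.dist X A4).

Let f := wft_fun A1 A2 A3 A4 B1 B2 B3 B4.
Let S := weighted_sum4 B1 B2 B3 B4 (unitv X A1) (unitv X A2) (unitv X A3) (unitv X A4).
Let M := B1 / (2 * Defs.dist X A1) + B2 / (2 * Defs.dist X A2)
         + B3 / (2 * Defs.dist X A3) + B4 / (2 * Defs.dist X A4).

Lemma dot_weighted_sum4_l (P : pt) :
  dot S P = B1 * dot (unitv X A1) P + B2 * dot (unitv X A2) P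
            + B3 * dot (unitv X A3) P + B4 * dot (unitv X A4) P.
Proof. unfold S, weighted_sum4, dot, vadd, vscale; simpl; ring. Qed.

Lemma wft_fun_ge_tangent (Y : pt) : f X - dot S (vsub Y X) <= f Y.
Proof.
  pose proof (dist_ge_tangent X A1 dist1_pos Y) as H1.
  pose proof (dist_ge_tangent X A2 dist2_pos Y) as H2.
  pose proof (dist_ge_tangent X A3 dist3_pos Y) as H3.
  pose proof (dist_ge_tangent X A4 dist4_pos Y) as H4.
  apply (Rmult_le_compat_l B1) in H1; apply (Rmult_le_compat_l B2) in H2;
    apply (Rmult_le_compat_l B3) in H3; apply (Rmult_le_compat_l B4) in H4; trivial.
  rewrite dot_weighted_sum4_l; unfold f, wft_fun; lra.
Qed.

Lemma wft_fun_le_quadratic (t : R) :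
  f (vadd X (vscale t S)) <= f X - t * dot S S + t ^ 2 * dot S S * M.
Proof.
  pose proof (dist_le_quadratic X A1 S t dist1_pos) as H1.
  pose proof (dist_le_quadratic X A2 S t dist2_pos) as H2.
  pose proof (dist_le_quadratic X A3 S t dist3_pos) as H3.
  pose proof (dist_le_quadratic X A4 S t dist4_pos) as H4.
  apply (Rmult_le_compat_l B1) in H1; apply (Rmult_le_compat_l B2) in H2;
    apply (Rmult_le_compat_l B3) in H3; apply (Rmult_le_compat_l B4) in H4; trivial.
  assert (HM : t ^ 2 * dot S S * M
               = B1 * (t ^ 2 * dot S S / (2 * Defs.dist X A1))
                 + B2 * (t ^ 2 * dot S S / (2 * Defs.dist X A2))
                 + B3 * (t ^ 2 * dot S S / (2 * Defs.dist X A3))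
                 + B4 * (t ^ 2 * dot S S / (2 * Defs.dist X A4)))
    by (unfold M, Rdiv; ring).
  rewrite HM, (dot_weighted_sum4_l S) at 1; unfold f, wft_fun; lra.
Qed.

Theorem is_wft_point_iff_weighted_sum4_eq0 :
  is_wft_point A1 A2 A3 A4 B1 B2 B3 B4 X <-> S = (0, 0).
Proof.
  split.
  - intros Hmin; apply dot_self_eq0.
    assert (HM : 0 <= M).
    { unfold M; repeat apply Rplus_le_le_0_compat;
        apply Rmult_le_pos; try apply Rlt_le, Rinv_0_lt_compat; lra. }
    set (t := / (M + 1)).
    assert (Ht2 : 0 < t ^ 2) by (apply pow_lt, Rinv_0_lt_compat; lra).
    assert (Hdescent : t * dot S S - t ^ 2 * dot S S * M = t ^ 2 * dot S S)
      by (unfold t; field; lra).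
    pose proof (Hmin (vadd X (vscale t S))) as Hle.
    pose proof (wft_fun_le_quadratic t) as Hq.
    pose proof (dot_self_ge0 S); unfold f in Hq; nra.
  - intros HS Y; pose proof (wft_fun_ge_tangent Y) as H.
    rewrite HS in H; unfold dot in H; simpl in H; unfold f in H; lra.
Qed.

End WeightedFermatTorricelliPoint.

Lemma dot_vadd_vsub (P Q : pt) : dot (vadd P Q) (vsub P Q) = dot P P - dot Q Q.
Proof. unfold dot, vadd, vsub; simpl; ring. Qed.

Lemma dot_self_scaled_units (u v : pt) (a b : R) :
  dot u u = 1 -> dot v v = 1 ->
  dot (vadd (vscale a u) (vscale b v)) (vadd (vscale a u) (vscale b v))
  = a ^ 2 + b ^ 2 + 2 * a * b * dot u v.
Proof.
  intros Hu Hv.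
  transitivity (a ^ 2 * dot u u + b ^ 2 * dot v v + 2 * a * b * dot u v).
  - unfold dot, vadd, vscale; simpl; ring.
  - rewrite Hu, Hv; ring.
Qed.

Lemma eq0_of_orthogonal_to_independent (S v w : pt) :
  dot S v = 0 -> dot S w = 0 -> cross v w <> 0 -> S = (0, 0).
Proof.
  destruct S as [s1 s2], v as [v1 v2], w as [w1 w2]; unfold dot, cross; simpl.
  intros Hv Hw Hvw.
  assert (H1 : s1 * (v1 * w2 - v2 * w1) = (s1 * v1 + s2 * v2) * w2 - (s1 * w1 + s2 * w2) * v2)
    by ring.
  assert (H2 : s2 * (v1 * w2 - v2 * w1) = (s1 * w1 + s2 * w2) * v1 - (s1 * v1 + s2 * v2) * w1)
    by ring.
  rewrite Hv, Hw in H1, H2.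
  f_equal; apply (Rmult_eq_reg_r (v1 * w2 - v2 * w1)); lra.
Qed.

Lemma cosine_balance_iff_weighted_sum4_eq0 (u1 u2 u3 u4 : pt) (B1 B2 B3 B4 : R) :
  dot u1 u1 = 1 -> dot u2 u2 = 1 -> dot u3 u3 = 1 -> dot u4 u4 = 1 ->
  B1 * B2 * cross u1 u2 + B2 * B3 * cross u2 u3 + B3 * B4 * cross u3 u4
    + B4 * B1 * cross u4 u1 <> 0 ->
  (B1 ^ 2 + B2 ^ 2 + 2 * B1 * B2 * dot u1 u2 = B3 ^ 2 + B4 ^ 2 + 2 * B3 * B4 * dot u3 u4 /\
   B1 ^ 2 + B4 ^ 2 + 2 * B1 * B4 * dot u1 u4 = B2 ^ 2 + B3 ^ 2 + 2 * B2 * B3 * dot u2 u3)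
  <-> weighted_sum4 B1 B2 B3 B4 u1 u2 u3 u4 = (0, 0).
Proof.
  intros Hu1 Hu2 Hu3 Hu4 HK.
  rewrite <- (dot_self_scaled_units u1 u2 B1 B2), <- (dot_self_scaled_units u3 u4 B3 B4),
    <- (dot_self_scaled_units u1 u4 B1 B4), <- (dot_self_scaled_units u2 u3 B2 B3) by assumption.
  set (a := vadd (vscale B1 u1) (vscale B2 u2)); set (b := vadd (vscale B3 u3) (vscale B4 u4)).
  set (c := vadd (vscale B1 u1) (vscale B4 u4)); set (d := vadd (vscale B2 u2) (vscale B3 u3)).
  assert (Hab : weighted_sum4 B1 B2 B3 B4 u1 u2 u3 u4 = vadd a b)
    by (unfold weighted_sum4, a, b, vadd, vscale; simpl; f_equal; ring).
  assert (Hcd : weighted_sum4 B1 B2 B3 B4 u1 u2 u3 u4 = vadd c d)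
    by (unfold weighted_sum4, c, d, vadd, vscale; simpl; f_equal; ring).
  assert (Hcross : cross (vsub a b) (vsub c d)
                   = -2 * (B1 * B2 * cross u1 u2 + B2 * B3 * cross u2 u3
                           + B3 * B4 * cross u3 u4 + B4 * B1 * cross u4 u1))
    by (unfold a, b, c, d, cross, vsub, vadd, vscale; simpl; ring).
  pose proof (dot_vadd_vsub a b) as Eab; pose proof (dot_vadd_vsub c d) as Ecd.
  rewrite <- Hab in Eab; rewrite <- Hcd in Ecd.
  split.
  - intros [E1 E2]; apply (eq0_of_orthogonal_to_independent _ (vsub a b) (vsub c d)); lra.
  - intros H0; rewrite H0 in Eab, Ecd; unfold dot at 1 in Eab; unfold dot at 1 in Ecd.
    simpl in Eab, Ecd; split; lra.
Qed.

Lemma interior_quad_cyclic_cross_neq0 (A1 A2 A3 A4 X : pt) (B1 B2 B3 B4 : R) :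
  0 < B1 -> 0 < B2 -> 0 < B3 -> 0 < B4 -> interior_quad A1 A2 A3 A4 X ->
  B1 * B2 * cross (unitv X A1) (unitv X A2) + B2 * B3 * cross (unitv X A2) (unitv X A3)
    + B3 * B4 * cross (unitv X A3) (unitv X A4) + B4 * B1 * cross (unitv X A4) (unitv X A1)
  <> 0.
Proof.
  intros HB1 HB2 HB3 HB4 Hint.
  destruct (interior_quad_dist_pos _ _ _ _ _ Hint) as (Hd1 & Hd2 & Hd3 & Hd4).
  rewrite !cross_unitv by assumption.
  set (d1 := Defs.dist X A1) in *; set (d2 := Defs.dist X A2) in *.
  set (d3 := Defs.dist X A3) in *; set (d4 := Defs.dist X A4) in *.
  assert (H12 : 0 < B1 * B2 / (d1 * d2)) by (apply Rdiv_lt_0_compat; nra).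
  assert (H23 : 0 < B2 * B3 / (d2 * d3)) by (apply Rdiv_lt_0_compat; nra).
  assert (H34 : 0 < B3 * B4 / (d3 * d4)) by (apply Rdiv_lt_0_compat; nra).
  assert (H41 : 0 < B4 * B1 / (d4 * d1)) by (apply Rdiv_lt_0_compat; nra).
  unfold Rdiv in *; destruct Hint as [Ho | Ho]; nra.
Qed.

Theorem proposition2 (A1 A2 A3 A4 A0 : pt) (c : R) :
  0 < c ->
  convex_quad A1 A2 A3 A4 ->
  interior_quad A1 A2 A3 A4 A0 ->
  forall B1 B2 B3 B4 : R,
    0 < B1 -> 0 < B2 -> 0 < B3 -> 0 < B4 ->
    floating_case A1 A2 A3 A4 B1 B2 B3 B4 ->
    (dynamic_plasticity A1 A2 A3 A4 A0 c B1 B2 B3 B4 <->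
     (B1 ^ 2 + B2 ^ 2 + 2 * B1 * B2 * cos (angle A1 A0 A2)
        = B3 ^ 2 + B4 ^ 2 + 2 * B3 * B4 * cos (angle A3 A0 A4) /\
      B1 ^ 2 + B4 ^ 2 + 2 * B1 * B4 * cos (angle A1 A0 A4)
        = B2 ^ 2 + B3 ^ 2 + 2 * B2 * B3 * cos (angle A2 A0 A3) /\
      B1 + B2 + B3 + B4 = c)).
Proof.
  intros _ _ Hint B1 B2 B3 B4 HB1 HB2 HB3 HB4 Hfloat.
  destruct (interior_quad_dist_pos _ _ _ _ _ Hint) as (Hd1 & Hd2 & Hd3 & Hd4).
  rewrite !cos_angle by assumption.
  rewrite <- and_assoc, cosine_balance_iff_weighted_sum4_eq0 by
    (apply dot_unitv_self || apply interior_quad_cyclic_cross_neq0; assumption).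
  unfold dynamic_plasticity.
  rewrite is_wft_point_iff_weighted_sum4_eq0 by (assumption || lra).
  tauto.
Qed.
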